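(* Let $A_1,A_2\subseteq A$ be disjoint, and let $M$ and $N$ be tree-like models with roots $s$ and $t$ respectively. If $M,s\succeq_{(A_1,A_2)}N,t$, then there exist a tree-like model $N'$ with root $t'$ and a relation $\mathcal Z\subseteq S^M\times S^{N'}$ such that (1) $N,t\,\underline{\leftrightarrow}\,N',t'$; (2) $\mathcal Z$ is an $(A_1,A_2)$-refinement between $M$ and $N'$ with $s\mathcal Zt'$; and (3) $\mathcal Z$ is injective: for all $v\in S^{N'}$ and $w_1,w_2\in S^M$, if $w_1\mathcal Zv$ and $w_2\mathcal Zv$ then $w_1=w_2$.
   Context: Fix a finite set $A$ of actions and a countably infinite set $Atom$ of propositional letters. A model is $M=\langle S^M,R^M,V^M\rangle$ with $S^M\neq\emptyset$ a set of states, $R^M_b\subseteq S^M\times S^M$ for each $b\in A$, and $V^M:Atom\to 2^{S^M}$. $R^+_M$ denotes the transitive closure of $\bigcup_{b\in A}R^M_b$. Refinements: given $P\subseteq Atom$ and disjoint $A_1,A_2\subseteq A$, a relation $\mathcal Z\subseteq S^M\times S^{M'}$ is a $P$-restricted $(A_1,A_2)$-refinement between $M$ and $M'$ if for every pair $u\mathcal Z u'$: (atoms) $u\in V^M(r)$ iff $u'\in V^{M'}(r)$ for all $r\in Atom\setminus P$; (forth) for every $a\in A\setminus A_2$ and every $v$ with $uR^M_a v$ there is $v'$ with $u'R^{M'}_a v'$ and $v\mathcal Z v'$; (back) for every $a\in A\setminus A_1$ and every $v'$ with $u'R^{M'}_a v'$ there is $v$ with $uR^M_a v$ and $v\mathcal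 Z v'$. Write $M,u\succeq^P_{(A_1,A_2)}M',u'$ if such a $\mathcal Z$ exists with $u\mathcal Z u'$; the superscript is omitted when $P=\emptyset$. A bisimulation is an $\emptyset$-restricted $(\emptyset,\emptyset)$-refinement; $M,s\,\underline{\leftrightarrow}\,N,t$ means one exists linking $s$ and $t$. A model $M$ is tree-like if: (i) there is a unique state $s$ (the root) such that $sR^+_Mt$ for all $t\in S^M\setminus\{s\}$; (ii) for each $t\in S^M\setminus\{s\}$ there is a unique $t'\in S^M$ with $t'R^M_at$ for some $a\in A$; (iii) $R^M_a\cap R^M_b=\emptyset$ for all distinct $a,b\in A$; (iv) $\langle t,t\rangle\notin R^+_M$ for all $t\in S^M$. *)

From mathcomp Require Import all_boot.
From Stdlib Require Import Relations.Relation_Operators.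
Unset Strict Implicit. Unset Printing Implicit Defensive.

Definition Atom := nat.

Record model (A : finType) := Model {
  St : Type;
  St_ne : inhabited St;
  Rel : A -> St -> St -> Prop;
  Val : Atom -> St -> Prop }.
Arguments St {A}. Arguments Rel {A}. Arguments Val {A}. Arguments St_ne {A}.

Definition step (A : finType) (M : model A) (u v : St M) : Prop :=
  exists b : A, Rel M b u v.
Arguments step {A}.

Definition Rplus (A : finType) (M : model A) : St M -> St M -> Prop :=
  clos_trans (St M) (step M).
Arguments Rplus {A}.

Definition is_root (A : finType) (M : model A) (s : St M) : Prop :=
  forall t, t <> s -> Rplus M s t.
Arguments is_root {A}.

Definition tree_like (A : finType) (M : model A) : Prop :=
  (exists! s, is_root M s) /\
  (forall s t, is_root M s -> t <> s ->
     exists! t', exists a : A, Rel M a t' t) /\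
  (forall a b : A, a <> b -> forall u v, ~ (Rel M a u v /\ Rel M b u v)) /\
  (forall t, ~ Rplus M t t).
Arguments tree_like {A}.

Definition is_refinement (A : finType) (P : Atom -> Prop) (A1 A2 : {set A})
    (M M' : model A) (Z : St M -> St M' -> Prop) : Prop :=
  forall u u', Z u u' ->
    (forall r, ~ P r -> (Val M r u <-> Val M' r u')) /\
    (forall a, a \notin A2 -> forall v, Rel M a u v ->
        exists v', Rel M' a u' v' /\ Z v v') /\
    (forall a, a \notin A1 -> forall v', Rel M' a u' v' ->
        exists v, Rel M a u v /\ Z v v').
Arguments is_refinement {A}.

Definition refines (A : finType) (P : Atom -> Prop) (A1 A2 : {set A})
    (M : model A) (u : St M) (M' : model A) (u' : St M') : Prop :=
  exists Z, is_refinement P A1 A2 M M' Z /\ Z u u'.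
Arguments refines {A}.

Definition no_atoms : Atom -> Prop := fun _ => False.

Definition bisim {A : finType} (M : model A) (s : St M) (N : model A) (t : St N)
  : Prop := refines no_atoms set0 set0 M s N t.

From mathcomp Require Import all_boot.
From Stdlib Require Import Relations.Relation_Operators ProofIrrelevance.

(* Unravel N from t into the tree of its finite paths, tagging each edge with
   the M-state that the given refinement Z0 matches it with, or with [None]
   once the path has taken an unmatched step (an A1-step, which M need not
   follow).  Sending a path to its last N-state is a bisimulation, relating
   each path to its tag is a refinement, and it is injective because a path
   carries a single tag.  The tree of paths is tree-like whatever N is. *)

Section Unravelling.

Context {A : finType} {A1 A2 : {set A}} {M N : model A}.
Context {s : St M} {t : St N} {Z0 : St M -> St N -> Prop}.

(* Paths are stored newest edge first. *)
Definition path := seq (A * St N * option (St M)).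

Definition path_end (p : path) : St N :=
  if p is (_, v, _) :: _ then v else t.

Definition path_tag (p : path) : option (St M) :=
  if p is (_, _, o) :: _ then o else Some s.

Definition tag_step (tw : option (St M)) (a : A) (v : St N)
    (o : option (St M)) : Prop :=
  if o is Some w' then exists2 w, tw = Some w & Rel M a w w' /\ Z0 w' v
  else tw = None \/ a \in A1.

Fixpoint tagged_path (p : path) : Prop :=
  if p is (a, v, o) :: q then
    [/\ tagged_path q, Rel N a (path_end q) v & tag_step (path_tag q) a v o]
  else True.

Definition unravel : model A :=
  @Model A {p | tagged_path p} (inhabits (exist _ [::] I))
    (fun a x y => exists v o, sval y = (a, v, o) :: sval x)
    (fun r x => Val N r (path_end (sval x))).

Definition unravel_root : St unravel := exist _ [::] I.

Definition tag_rel (w : St M) (x : St unravel) : Prop :=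
  path_tag (sval x) = Some w.

Lemma unravel_node_eq (x y : St unravel) : sval x = sval y -> x = y.
Proof. by case: x y => [p hp] [q hq] /= E; exact: subset_eq_compat. Qed.

Lemma unravel_extend o {x : St unravel} {a v} :
  Rel N a (path_end (sval x)) v -> tag_step (path_tag (sval x)) a v o ->
  exists2 y, Rel unravel a x y & sval y = (a, v, o) :: sval x.
Proof.
case: x => p hp /= HN Ho.
have hy : tagged_path ((a, v, o) :: p) by [].
by exists (exist _ _ hy) => //; exists v, o.
Qed.

Lemma unravel_edge a (x y : St unravel) :
  Rel unravel a x y ->
  exists v o, [/\ sval y = (a, v, o) :: sval x, Rel N a (path_end (sval x)) v
                & tag_step (path_tag (sval x)) a v o].
Proof.
case: y => q hq [v [o /= Eq]]; subst q.
by case: hq => _ HN Ho; exists v, o.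
Qed.

Lemma unravel_Rplus_size (x y : St unravel) :
  Rplus unravel x y -> size (sval x) < size (sval y).
Proof.
elim=> [x0 y0 [b [v [o ->]]] // | x0 y0 z0 _ H1 _ H2].
exact: ltn_trans H1 H2.
Qed.

Lemma unravel_root_reaches (x : St unravel) :
  x = unravel_root \/ Rplus unravel unravel_root x.
Proof.
case: x => p; elim: p => [|[[a v] o] q IH] hp.
  by left; exact: unravel_node_eq.
right; have hq : tagged_path q by case: hp.
have st : step unravel (exist _ q hq) (exist _ _ hp) by exists a, v, o.
case: (IH hq) => [<- | Hr]; first exact: t_step.
exact: t_trans Hr (t_step _ _ _ _ st).
Qed.

Lemma unravel_is_root : is_root unravel unravel_root.
Proof. by move=> x ne; case: (unravel_root_reaches x). Qed.

Lemma unravel_root_unique r : is_root unravel r -> r = unravel_root.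
Proof.
move=> Hr; apply: unravel_node_eq; case: r Hr => [[|x q] hp] Hr //=.
have ne : unravel_root <> exist _ (x :: q) hp by move/(f_equal (@sval _ _)).
by have /unravel_Rplus_size := Hr _ ne.
Qed.

Lemma unravel_tree_like : tree_like unravel.
Proof.
split.
  exists unravel_root; split; first exact: unravel_is_root.
  by move=> r /unravel_root_unique.
split.
  move=> r [[|[[a v] o] q] hp] /unravel_root_unique -> ne.
    by case: ne; exact: unravel_node_eq.
  have hq : tagged_path q by case: (hp).
  exists (exist _ q hq); split; first by exists a, v, o.
  move=> y [b /unravel_edge [v' [o' [E _ _]]]].
  by apply: unravel_node_eq; case: E.
split.
  move=> a b ab x y [/unravel_edge [v1 [o1 [E1 _ _]]]
                     /unravel_edge [v2 [o2 [E2 _ _]]]].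
  by apply: ab; rewrite E1 in E2; case: E2.
by move=> x /unravel_Rplus_size; rewrite ltnn.
Qed.

Hypothesis Z0_refinement : is_refinement no_atoms A1 A2 M N Z0.
Hypothesis Z0_roots : Z0 s t.

Lemma tag_rel_Z0 {w x} : tag_rel w x -> Z0 w (path_end (sval x)).
Proof.
rewrite /tag_rel; case: x => [[|[[a v] o] q] hp] /= Ew; first by case: Ew => <-.
by case: hp => _ _; rewrite Ew => -[w0 _ []].
Qed.

Lemma unravel_bisim : bisim N t unravel unravel_root.
Proof.
exists (fun v x => path_end (sval x) = v); split=> // v x Ev.
split; first by move=> r _; rewrite /= Ev.
split=> [a _ v' Hv | a _ y /unravel_edge [v' [o [-> HN _]]]]; last first.
  by exists v'; rewrite -Ev.
rewrite -Ev in Hv.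
case Et: (path_tag (sval x)) => [w|]; last first.
  have [y Rxy Ey] := unravel_extend None Hv (or_introl Et).
  by exists y; split=> //; rewrite Ey.
case HA: (a \in A1).
  have [y Rxy Ey] := unravel_extend None Hv (or_intror HA).
  by exists y; split=> //; rewrite Ey.
have [_ [_ Hback]] := Z0_refinement _ _ (tag_rel_Z0 Et).
have [w' [Hw Hz]] := Hback a (negbT HA) v' Hv.
have tw : tag_step (path_tag (sval x)) a v' (Some w') by exists w.
have [y Rxy Ey] := unravel_extend (Some w') Hv tw.
by exists y; split=> //; rewrite Ey.
Qed.

Lemma unravel_refinement : is_refinement no_atoms A1 A2 M unravel tag_rel.
Proof.
move=> w x Et; have [Hval [Hforth _]] := Z0_refinement _ _ (tag_rel_Z0 Et).
split=> //; split=> [a HA w' Hw | a HA y /unravel_edge [v' [o [Ey _ Ho]]]].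
  have [v' [HN Hz]] := Hforth a HA w' Hw.
  have tw : tag_step (path_tag (sval x)) a v' (Some w') by exists w.
  have [y Rxy Ey] := unravel_extend (Some w') HN tw.
  by exists y; split=> //; rewrite /tag_rel Ey.
rewrite /tag_rel Ey /=; clear Ey.
case: o Ho => [w' [w0 E0 [Hw _]] | [E0 | HA1]].
- by move: Et; rewrite /tag_rel E0 => -[<-]; exists w'.
- by move: Et; rewrite /tag_rel E0.
- by rewrite HA1 in HA.
Qed.

Lemma tag_rel_injective x w1 w2 : tag_rel w1 x -> tag_rel w2 x -> w1 = w2.
Proof. by rewrite /tag_rel => -> []. Qed.

End Unravelling.

Theorem mainTheorem13 (A : finType) (A1 A2 : {set A})
  (M N : model A) (s : St M) (t : St N) :
  [disjoint A1 & A2] ->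
  tree_like M -> is_root M s ->
  tree_like N -> is_root N t ->
  refines no_atoms A1 A2 M s N t ->
  exists (N' : model A) (t' : St N') (Z : St M -> St N' -> Prop),
    tree_like N' /\ is_root N' t' /\
    bisim N t N' t' /\
    is_refinement no_atoms A1 A2 M N' Z /\ Z s t' /\
    (forall (v : St N') (w1 w2 : St M), Z w1 v -> Z w2 v -> w1 = w2).
Proof.
move=> _ _ _ _ _ [Z0 [HZ0 Hst]].
exists (@unravel _ A1 M N s t Z0), unravel_root, tag_rel.
split; first exact: unravel_tree_like.
split; first exact: unravel_is_root.
split; first exact: unravel_bisim HZ0 Hst.
split; first exact: unravel_refinement HZ0 Hst.
split=> // v w1 w2; exact: tag_rel_injective.
Qed.
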